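(* Let $\sigma_1=\sigma_x,\sigma_2=\sigma_y,\sigma_3=\sigma_z$ and, for $\underline{\lambda}\in\mathbb{R}^3$, $U_{\underline{\lambda}}=\exp\{-i\sum_{j=1}^3\lambda_j\,\sigma_j\otimes\sigma_j\}$. Let the probe be $|\psi_0\rangle=(\alpha,\ \beta e^{i\phi_\beta},\ \gamma e^{i\phi_\gamma},\ \delta e^{i\phi_\delta})^T$ in the computational basis $\{|00\rangle,|01\rangle,|10\rangle,|11\rangle\}$, with $\alpha,\beta,\gamma,\delta\in[0,1]$, $\alpha^2+\beta^2+\gamma^2+\delta^2=1$, $\phi_\beta,\phi_\gamma,\phi_\delta\in[0,2\pi)$, and let $Q$ be the quantum Fisher information matrix of the model $\underline{\lambda}\mapsto U_{\underline{\lambda}}|\psi_0\rangle$. Then $$\mathrm{Det}[Q]=1024\left[\alpha^4+\delta^4-2\alpha^2\delta^2\cos 2\phi_\delta\right]\left[\beta^4+\gamma^4-2\beta^2\gamma^2\cos\big(2(\phi_\beta-\phi_\gamma)\big)\right],$$ and, whenever $Q$ is invertible, $$\mathrm{Tr}[Q^{-1}]=\frac{3}{16}\left(\frac{\alpha^2+\delta^2}{\alpha^4-2\alpha^2\delta^2\cos 2\phi_\delta+\delta^4}+\frac{\beta^2+\gamma^2}{\beta^4-2\beta^2\gamma^2\cos\big(2(\phi_\beta-\phi_\gamma)\big)+\gamma^4}\right).$$ In particular both quantities are independent of $\underline{\lambda}$.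
   Context: For a pure-state model $\underline{\lambda}\mapsto|\psi_{\underline{\lambda}}\rangle$, with $\partial_j=\partial/\partial\lambda_j$, the quantum Fisher information matrix is $Q_{jk}=4\,\mathrm{Re}\big[\langle\partial_j\psi|\partial_k\psi\rangle-\langle\partial_j\psi|\psi\rangle\langle\psi|\partial_k\psi\rangle\big]$, $j,k\in\{1,2,3\}$. *)

From HB Require Import structures.
From mathcomp Require Import all_boot all_order all_algebra.
From mathcomp Require Import complex.
From mathcomp Require Import all_classical all_reals all_analysis.
Set Implicit Arguments. Unset Strict Implicit. Unset Printing Implicit Defensive.
Import Order.TTheory GRing.Theory Num.Theory numFieldNormedType.Exports.
Local Open Scope ring_scope.
Local Open Scope complex_scope.

Section QFI.
Variable R : realType.
Local Notation C := (R[i]).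

Definition iu : C := Complex 0 1.

Definition expmx_partial (A : 'M[C]_4) (N : nat) : 'M[C]_4 :=
  \sum_(k < N) ((k`!)%:R)^-1 *: A ^+ k.
Definition expmx (A : 'M[C]_4) : 'M[C]_4 :=
  \matrix_(i, j)
    Complex (limn (fun N => complex.Re (expmx_partial A N i j)))
            (limn (fun N => complex.Im (expmx_partial A N i j))).

Definition sigma_x : 'M[C]_2 := \matrix_(i, j) (if i == j then 0 else 1).
Definition sigma_y : 'M[C]_2 :=
  \matrix_(i, j) (if i == j then 0 else if (i : nat) == 0%N then - iu else iu).
Definition sigma_z : 'M[C]_2 :=
  \matrix_(i, j) (if i == j then (if (i : nat) == 0%N then 1 else -1) else 0).
Definition pauli (j : 'I_3) : 'M[C]_2 :=
  match (j : nat) with 0%N => sigma_x | 1%N => sigma_y | _ => sigma_z end.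

(* Kronecker product of 2x2 matrices; basis index 2*a+b <-> |a b>, i.e.
   computational basis ordered |00>,|01>,|10>,|11>. *)
Definition kron2 (A B : 'M[C]_2) : 'M[C]_4 :=
  \matrix_(i, j) (A (inord (i %/ 2)) (inord (j %/ 2)) *
                  B (inord (i %% 2)) (inord (j %% 2))).

Definition Ulam (lam : 'rV[R]_3) : 'M[C]_4 :=
  expmx (- iu *: \sum_(j < 3) (lam 0 j)%:C *: kron2 (pauli j) (pauli j)).

Definition partial (F : 'rV[R]_3 -> R) (j : 'I_3) (lam : 'rV[R]_3) : R :=
  derive1 (fun t : R => F (lam + t *: delta_mx 0 j)) 0.

Definition dvec n (psi : 'rV[R]_3 -> 'cV[C]_n) (j : 'I_3) (lam : 'rV[R]_3)
  : 'cV[C]_n :=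
  \col_k Complex (partial (fun l => complex.Re (psi l k 0)) j lam)
                 (partial (fun l => complex.Im (psi l k 0)) j lam).

Definition braket n (u v : 'cV[C]_n) : C := \sum_(k < n) (u k 0)^* * v k 0.

Definition qfi n (psi : 'rV[R]_3 -> 'cV[C]_n) (lam : 'rV[R]_3) : 'M[R]_3 :=
  \matrix_(j, k)
    (4 * complex.Re (braket (dvec psi j lam) (dvec psi k lam)
             - braket (dvec psi j lam) (psi lam) * braket (psi lam) (dvec psi k lam))).

Definition expi (phi : R) : C := Complex (cos phi) (sin phi).

Definition probe (a b g d pb pg pd : R) : 'cV[C]_4 :=
  \col_k [:: a%:C; b%:C * expi pb; g%:C * expi pg; d%:C * expi pd]`_k.

Definition model (a b g d pb pg pd : R) (lam : 'rV[R]_3) : 'cV[C]_4 :=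
  Ulam lam *m probe a b g d pb pg pd.

End QFI.

From HB Require Import structures.
From mathcomp Require Import all_boot all_order all_algebra.
From mathcomp Require Import complex.
From mathcomp Require Import all_classical all_reals all_analysis.
From mathcomp Require Import ring.
Set Implicit Arguments. Unset Strict Implicit. Unset Printing Implicit Defensive.
Import Order.TTheory GRing.Theory Num.Theory numFieldNormedType.Exports.
Local Open Scope ring_scope.
Local Open Scope classical_set_scope.

(* The generator sum_j lambda_j sigma_j (x) sigma_j is diagonal in the Bell
   basis b_0, ..., b_3, with eigenvalue mu_m = sum_j s_mj lambda_j on b_m for
   fixed sign vectors s_m in {-1, 1}^3.  Hence U_lambda psi_0 = sum_m e^{-i mu_m} z_m b_m,
   the derivative d_j multiplies the m-th term by -i s_mj, and since the b_m are
   orthogonal the QFI is 4 times the covariance matrix of the random vector s_m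
   drawn with the Bell populations w_m = |<b_m|psi_0>|^2 / 2, whatever lambda is.
   For these four sign vectors that covariance matrix has determinant
   256 w_0 w_1 w_2 w_3 and adjugate trace 48 sum_m prod_(m' <> m) w_m', and for
   the probe 4 w_0 w_1 and 4 w_2 w_3 are the two brackets of the statement. *)

Lemma exprn_orthogonal_idempotents (K : pzRingType) (A : algType K)
    (I : finType) (P : I -> A) (c : I -> K) :
  (forall i j, P i * P j = if i == j then P i else 0) -> \sum_i P i = 1 ->
  forall k, (\sum_i c i *: P i) ^+ k = \sum_i c i ^+ k *: P i.
Proof.
move=> PP sumP; elim=> [|k IHk].
  by rewrite expr0 -sumP; apply: eq_bigr => i _; rewrite expr0 scale1r.
rewrite exprSr IHk mulr_suml; apply: eq_bigr => i _.
rewrite mulr_sumr (bigD1 i) //= big1 ?addr0 => [|j ji].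
  by rewrite -scalerAl -scalerAr PP eqxx scalerA exprSr.
by rewrite -scalerAl -scalerAr PP eq_sym (negbTE ji) !scaler0.
Qed.

Lemma mxtrace_invmx (F : fieldType) n (A : 'M[F]_n) : A \in unitmx ->
  \tr (invmx A) = (\sum_i cofactor A i i) / \det A.
Proof.
move=> unitA; rewrite /invmx unitA mxtraceZ mulrC.
by congr (_ * _); apply: eq_bigr => i _; rewrite mxE.
Qed.

Lemma is_derive_comp_affine (R : realType) (f : R -> R) (y r df : R) :
  is_derive y 1 f df -> is_derive (0 : R) 1 (fun t => f (y + r * t)) (df * r).
Proof.
move=> fd; have dlin : is_derive (0 : R) 1 (fun t : R => y + r * t) r.
  have := is_deriveD (is_derive_cst y (0 : R) 1) (is_deriveZ r (is_derive_id (0 : R) (1 : R))).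
  by rewrite add0r /GRing.scale /= mulr1.
by apply: (is_derive1_comp _ dlin); rewrite mulr0 addr0.
Qed.

Lemma derive1_sum (R : numFieldType) p (h : 'I_p -> R -> R) (dh : 'I_p -> R) (x : R) :
  (forall i, is_derive x 1 (h i) (dh i)) ->
  derive1 (fun t => \sum_i h i t) x = \sum_i dh i.
Proof. by move=> hd; have [_ <-] := is_derive_sum hd; rewrite derive1E fct_sumE. Qed.

Local Open Scope complex_scope.

Section ComplexExponential.
Variable R : realType.
Local Notation C := R[i].
Local Notation Re := complex.Re.
Local Notation Im := complex.Im.

Lemma ReM (x y : C) : Re (x * y) = Re x * Re y - Im x * Im y.
Proof. by case: x => a b; case: y. Qed.

Lemma ImM (x y : C) : Im (x * y) = Re x * Im y + Im x * Re y.
Proof. by case: x => a b; case: y => c d /=; ring. Qed.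

Lemma Re_real (r : R) : Re r%:C = r. Proof. by []. Qed.
Lemma Im_real (r : R) : Im r%:C = 0. Proof. by []. Qed.
Lemma Re_iu : Re (iu R) = 0. Proof. by []. Qed.
Lemma Im_iu : Im (iu R) = 1. Proof. by []. Qed.

Lemma Re_expi (x : R) : Re (expi x) = cos x. Proof. by []. Qed.
Lemma Im_expi (x : R) : Im (expi x) = sin x. Proof. by []. Qed.
Lemma ReJ (x : C) : Re (Num.conj x) = Re x. Proof. by case: x. Qed.
Lemma ImJ (x : C) : Im (Num.conj x) = - Im x. Proof. by case: x. Qed.
Lemma Re1 : Re 1 = 1 :> R. Proof. by []. Qed.
Lemma Im1 : Im 1 = 0 :> R. Proof. by []. Qed.

Lemma ReD (x y : C) : Re (x + y) = Re x + Re y. Proof. by case: x; case: y. Qed.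
Lemma ImD (x y : C) : Im (x + y) = Im x + Im y. Proof. by case: x; case: y. Qed.
Lemma ReN (x : C) : Re (- x) = - Re x. Proof. by case: x. Qed.
Lemma ImN (x : C) : Im (- x) = - Im x. Proof. by case: x. Qed.

Lemma Re_sum (I : Type) (r : seq I) (P : pred I) (F : I -> C) :
  Re (\sum_(i <- r | P i) F i) = \sum_(i <- r | P i) Re (F i).
Proof. exact: (big_morph _ ReD). Qed.

Lemma Im_sum (I : Type) (r : seq I) (P : pred I) (F : I -> C) :
  Im (\sum_(i <- r | P i) F i) = \sum_(i <- r | P i) Im (F i).
Proof. exact: (big_morph _ ImD). Qed.

Definition ReImE := (ReD, ImD, ReN, ImN, ReM, ImM, Re_real, Im_real, Re_iu, Im_iu,
                     Re_expi, Im_expi, ReJ, ImJ, Re1, Im1).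

Lemma complex_ext (x y : C) : Re x = Re y -> Im x = Im y -> x = y.
Proof. by case: x => a b; case: y => c d /= -> ->. Qed.

Lemma iu_sqr : iu R ^+ 2 = -1.
Proof. by apply: complex_ext; rewrite expr2 !ReImE; ring. Qed.

Lemma exp_coeff_iE (x : R) k :
  (k`!%:R)^-1 * (iu R * x%:C) ^+ k = cos_coeff x k +i* sin_coeff x k.
Proof.
have iuX n : iu R ^+ n = (if odd n then iu R else 1) * ((-1) ^+ n./2)%:C.
  rewrite -{1}(odd_double_half n) exprD -mul2n exprM iu_sqr.
  by rewrite -(rmorphN1 (real_complex R)) -(rmorphXn (real_complex R)); case: (odd n).
rewrite -(rmorph_nat (real_complex R)) -fmorphV exprMn iuX.
rewrite -(rmorphXn (real_complex R)).
case ok : (odd k); apply: complex_ext;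
  rewrite [RHS]/= !ReImE /cos_coeff /sin_coeff [RHS]/= ok ?mulr0n ?mulr1n /exprz; try ring.
have half_pred : k.-1./2 = k./2.
  by rewrite -{1}(odd_double_half k) ok add1n /= doubleK.
by rewrite half_pred; ring.
Qed.

Lemma sqr_norm_half_expi_add (u v x y : R) :
  let z := (2^-1)%:C * (u%:C * expi x + v%:C * expi y) in
  2 * (Re z ^+ 2 + Im z ^+ 2) = (u ^+ 2 + v ^+ 2 + 2 * u * v * cos (x - y)) / 2.
Proof.
move=> z; rewrite /z !ReImE cosB; have := cos2Dsin2 x; have := cos2Dsin2 y.
set cx := cos x; set sx := sin x; set cy := cos y; set sy := sin y => unit_y unit_x.
transitivity ((u ^+ 2 * (cx ^+ 2 + sx ^+ 2) + v ^+ 2 * (cy ^+ 2 + sy ^+ 2)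
               + 2 * u * v * (cx * cy + sx * sy)) / 2); first by field.
by rewrite unit_x unit_y !mulr1.
Qed.

Lemma expi_conj_mul (x : R) : Num.conj (expi x) * expi x = 1.
Proof.
by apply: complex_ext; rewrite !ReImE; [rewrite -(cos2Dsin2 x) |]; ring.
Qed.

Lemma exp_partial_iE (x : R) N :
  \sum_(k < N) (k`!%:R)^-1 * (iu R * x%:C) ^+ k
  = series (cos_coeff x) N +i* series (sin_coeff x) N.
Proof.
apply: complex_ext; rewrite ?Re_sum ?Im_sum /series /= big_mkord;
  by apply: eq_bigr => k _; rewrite exp_coeff_iE.
Qed.

Lemma expmx_spectral (I : finType) (P : I -> 'M[C]_4) (x : I -> R) :
  (forall i j, P i *m P j = if i == j then P i else 0) -> \sum_i P i = 1 ->
  (forall i a b, Im (P i a b) = 0) ->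
  expmx (\sum_i (iu R * (x i)%:C) *: P i) = \sum_i expi (x i) *: P i.
Proof.
move=> PP sumP realP.
have partialE N a b : expmx_partial (\sum_i (iu R * (x i)%:C) *: P i) N a b
    = \sum_i (series (cos_coeff (x i)) N +i* series (sin_coeff (x i)) N) * P i a b.
  rewrite /expmx_partial.
  have PPr i j : P i * P j = if i == j then P i else 0 by exact: PP.
  under eq_bigr => k _ do rewrite exprn_orthogonal_idempotents // scaler_sumr.
  rewrite exchange_big summxE; apply: eq_bigr => i _.
  rewrite -exp_partial_iE mulr_suml summxE; apply: eq_bigr => k _.
  by rewrite scalerA !mxE.
have lim_sum (f : I -> nat -> R) (l : I -> R) :
    (forall i, f i n @[n --> \oo] --> l i) -> limn (fun N => \sum_i f i N) = \sum_i l i.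
  by move=> fl; apply: cvg_lim => //; apply: cvg_big => //; exact: add_continuous.
apply/matrixP => a b; rewrite !mxE summxE.
under eq_fun => N do rewrite partialE Re_sum.
under [X in Complex _ (limn X)]eq_fun => N do rewrite partialE Im_sum.
rewrite (lim_sum _ (fun i => cos (x i) * Re (P i a b))); last first.
  move=> i; under eq_fun => N do rewrite ReM realP mulr0 subr0 /=.
  by apply: cvgMr_tmp; rewrite unlock; exact: is_cvg_series_cos_coeff.
rewrite (lim_sum _ (fun i => sin (x i) * Re (P i a b))); last first.
  move=> i; under eq_fun => N do rewrite ImM realP mulr0 add0r /=.
  by apply: cvgMr_tmp; rewrite unlock; exact: is_cvg_series_sin_coeff.
apply: complex_ext; rewrite ?Re_sum ?Im_sum /=; apply: eq_bigr => i _;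
  by rewrite mxE ?ReM ?ImM realP /=; ring.
Qed.

Lemma is_derive_Re_expi_affine (y r : R) (w : C) :
  is_derive (0 : R) 1 (fun t => Re (expi (y + r * t) * w)) (Re (iu R * r%:C * expi y * w)).
Proof.
have := is_deriveB
  (is_deriveM (is_derive_comp_affine r (is_derive_cos y)) (is_derive_cst (Re w) (0 : R) (1 : R)))
  (is_deriveM (is_derive_comp_affine r (is_derive_sin y)) (is_derive_cst (Im w) (0 : R) (1 : R))).
rewrite [X in is_derive _ _ X _ -> _](_ : _ = fun t => Re (expi (y + r * t) * w)).
  by move=> d; apply: (is_derive_eq d); rewrite !scaler0 !add0r /GRing.scale /= !ReImE; ring.
by apply/funext => t /=; rewrite ReM.
Qed.

Lemma is_derive_Im_expi_affine (y r : R) (w : C) :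
  is_derive (0 : R) 1 (fun t => Im (expi (y + r * t) * w)) (Im (iu R * r%:C * expi y * w)).
Proof.
have := is_deriveD
  (is_deriveM (is_derive_comp_affine r (is_derive_cos y)) (is_derive_cst (Im w) (0 : R) (1 : R)))
  (is_deriveM (is_derive_comp_affine r (is_derive_sin y)) (is_derive_cst (Re w) (0 : R) (1 : R))).
rewrite [X in is_derive _ _ X _ -> _](_ : _ = fun t => Im (expi (y + r * t) * w)).
  by move=> d; apply: (is_derive_eq d); rewrite !scaler0 !add0r /GRing.scale /= !ReImE; ring.
by apply/funext => t /=; rewrite ImM.
Qed.

End ComplexExponential.

Section PhaseModel.
Variables (R : realType) (p n : nat) (s : 'I_p -> 'I_3 -> R) (b : 'I_p -> 'I_n -> R).
Local Notation C := R[i].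
Local Notation Re := complex.Re.
Local Notation Im := complex.Im.

Definition energy (i : 'I_p) (lam : 'rV[R]_3) : R := \sum_j s i j * lam 0 j.

Definition combv (f : 'I_p -> C) : 'cV[C]_n := \col_k \sum_i f i * (b i k)%:C.

Definition covmx (w : 'I_p -> R) : 'M[R]_3 :=
  \matrix_(j, k) (\sum_i s i j * s i k * w i
                  - (\sum_i s i j * w i) * (\sum_i s i k * w i)).

(* U_lambda v when the generator is diagonal in the orthogonal real basis b,
   with eigenvalue energy i lambda on b_i and v = sum_i c_i b_i. *)
Definition phase_model (c : 'I_p -> C) (lam : 'rV[R]_3) : 'cV[C]_n :=
  combv (fun i => expi (- energy i lam) * c i).

Lemma energy_shift i lam j (t : R) :
  energy i (lam + t *: delta_mx 0 j) = energy i lam + s i j * t.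
Proof.
rewrite /energy; under eq_bigr => l _ do rewrite !mxE mulrDr.
rewrite big_split /=; congr (_ + _).
rewrite (bigD1 j) //= big1 ?addr0 => [|l /negbTE lj]; first by rewrite eqxx mulr1.
by rewrite lj !mulr0.
Qed.

Lemma dvec_phase_model c j lam :
  dvec (phase_model c) j lam = phase_model (fun i => - iu R * (s i j)%:C * c i) lam.
Proof.
have shiftE k t : phase_model c (lam + t *: delta_mx 0 j) k 0
    = \sum_i expi (- energy i lam + - s i j * t) * (c i * (b i k)%:C).
  by rewrite mxE; apply: eq_bigr => i _; rewrite energy_shift opprD mulNr mulrA.
apply/matrixP => k z; rewrite (ord1 z) !mxE /partial.
under eq_fun => t do rewrite shiftE Re_sum.
under [X in Complex _ (derive1 X _)]eq_fun => t do rewrite shiftE Im_sum.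
rewrite (derive1_sum (fun i => is_derive_Re_expi_affine _ _ _)).
rewrite (derive1_sum (fun i => is_derive_Im_expi_affine _ _ _)).
apply: complex_ext; rewrite /= ?Re_sum ?Im_sum; apply: eq_bigr => i _; congr (_ _);
  by rewrite rmorphN /=; ring.
Qed.

Section Orthogonal.
Variable r : R.
Hypothesis b_orthogonal :
  forall i i', \sum_k b i k * b i' k = if i == i' then r else 0.

Lemma braket_combv f g :
  braket (combv f) (combv g) = r%:C * \sum_i Num.conj (f i) * g i.
Proof.
have entryE k : Num.conj (combv f k 0) * combv g k 0
    = \sum_i \sum_i' Num.conj (f i) * g i' * (b i k * b i' k)%:C.
  rewrite !mxE rmorph_sum mulr_suml; apply: eq_bigr => i _.
  rewrite mulr_sumr; apply: eq_bigr => i' _.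
  by apply: complex_ext; rewrite !ReImE; ring.
rewrite /braket; under eq_bigr => k _ do rewrite entryE.
rewrite exchange_big mulr_sumr; apply: eq_bigr => i _ /=.
have innerE i' : \sum_k Num.conj (f i) * g i' * (b i k * b i' k)%:C
    = Num.conj (f i) * g i' * (if i == i' then r else 0)%:C.
  by rewrite -mulr_sumr -rmorph_sum b_orthogonal.
rewrite exchange_big /=; under eq_bigr => i' _ do rewrite innerE.
rewrite (bigD1 i) //= eqxx big1 ?addr0 1?mulrC // => i' i'i.
by rewrite eq_sym (negbTE i'i) rmorph0 mulr0.
Qed.

Lemma braket_phase_model c c' lam :
  braket (phase_model c lam) (phase_model c' lam) = r%:C * \sum_i Num.conj (c i) * c' i.
Proof.
rewrite braket_combv; congr (_ * _); apply: eq_bigr => i _.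
by rewrite rmorphM mulrACA expi_conj_mul mul1r.
Qed.

Lemma qfi_phase_model c lam :
  qfi (phase_model c) lam = 4 *: covmx (fun i => r * (Re (c i) ^+ 2 + Im (c i) ^+ 2)).
Proof.
set w := fun i => _.
apply/matrixP => j k; rewrite !mxE !dvec_phase_model !braket_phase_model.
have E1 : r%:C * \sum_i Num.conj (- iu R * (s i j)%:C * c i) * (- iu R * (s i k)%:C * c i)
    = (\sum_i s i j * s i k * w i)%:C.
  rewrite mulr_sumr rmorph_sum; apply: eq_bigr => i _.
  by apply: complex_ext; rewrite !ReImE /w; ring.
have E2 : r%:C * \sum_i Num.conj (- iu R * (s i j)%:C * c i) * c i
    = iu R * (\sum_i s i j * w i)%:C.
  rewrite mulr_sumr rmorph_sum mulr_sumr; apply: eq_bigr => i _.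
  by apply: complex_ext; rewrite !ReImE /w; ring.
have E3 : r%:C * \sum_i Num.conj (c i) * (- iu R * (s i k)%:C * c i)
    = - iu R * (\sum_i s i k * w i)%:C.
  rewrite mulr_sumr rmorph_sum mulr_sumr; apply: eq_bigr => i _.
  by apply: complex_ext; rewrite !ReImE /w; ring.
by rewrite E1 E2 E3 !ReImE; ring.
Qed.
End Orthogonal.
End PhaseModel.

Section BellBasis.
Variable R : realType.
Local Notation C := R[i].
Local Notation Re := complex.Re.
Local Notation Im := complex.Im.

(* Rows: the unnormalised Bell states Phi+, Phi-, Psi+, Psi- in the basis
   |00>, |01>, |10>, |11>. *)
Definition bell (m k : 'I_4) : R :=
  nth 0 (nth [::] [:: [:: 1; 0; 0; 1]; [:: 1; 0; 0; -1];
                      [:: 0; 1; 1; 0]; [:: 0; 1; -1; 0]] m) k.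

(* The eigenvalue of sigma_j (x) sigma_j on the m-th Bell state. *)
Definition bell_sign (m : 'I_4) (j : 'I_3) : R :=
  nth 0 (nth [::] [:: [:: 1; -1; 1]; [:: -1; 1; 1];
                      [:: 1; 1; -1]; [:: -1; -1; -1]] m) j.

Definition bell_proj (m : 'I_4) : 'M[C]_4 :=
  \matrix_(k, l) (bell m k * bell m l / 2)%:C.

Definition bell_amplitude (v : 'cV[C]_4) (m : 'I_4) : C :=
  \sum_l (bell m l / 2)%:C * v l 0.

Lemma bell_orthogonal m m' :
  \sum_k bell m k * bell m' k = if m == m' then 2 else 0.
Proof.
rewrite !big_ord_recr big_ord0 /=.
by case: m => [[|[|[|[|?]]]] ?] //; case: m' => [[|[|[|[|?]]]] ?] //=; rewrite /bell /=; ring.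
Qed.

Lemma bell_proj_mul m m' :
  bell_proj m *m bell_proj m' = if m == m' then bell_proj m else 0.
Proof.
apply/matrixP => k l; rewrite !mxE.
under eq_bigr => i _ do rewrite !mxE -rmorphM.
rewrite -rmorph_sum.
have -> : \sum_i bell m k * bell m i / 2 * (bell m' i * bell m' l / 2)
    = bell m k * bell m' l / 4 * \sum_i bell m i * bell m' i.
  by rewrite mulr_sumr; apply: eq_bigr => i _; field.
rewrite bell_orthogonal; case: eqP => [<-|_]; rewrite !mxE ?mulr0 ?rmorph0 //.
by congr (_%:C); field.
Qed.

Lemma sum_bell_proj : \sum_m bell_proj m = 1.
Proof.
apply/matrixP => k l; rewrite summxE !big_ord_recr big_ord0 /= !mxE.
case: k => [[|[|[|[|?]]]] ?] //; case: l => [[|[|[|[|?]]]] ?] //=;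
  by apply: complex_ext; rewrite !ReImE /bell /=; field.
Qed.

Lemma pauli_bellE (lam : 'rV[R]_3) :
  \sum_j (lam 0 j)%:C *: kron2 (pauli R j) (pauli R j)
  = \sum_m (energy bell_sign m lam)%:C *: bell_proj m.
Proof.
have inord_eq (x y : nat) : (x < 2)%N -> (y < 2)%N -> ((inord x : 'I_2) == inord y) = (x == y).
  by move=> x2 y2; rewrite -val_eqE /= !inordK.
apply/matrixP => k l; rewrite !summxE !big_ord_recr !big_ord0 /= !mxE /energy.
rewrite !big_ord_recr !big_ord0 /=.
case: k => [[|[|[|[|?]]]] ?] //; case: l => [[|[|[|[|?]]]] ?] //=.
all: rewrite ?mxE /= ?inord_eq // ?inordK //=.
all: by apply: complex_ext; rewrite !ReImE /bell /bell_sign /=; field.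
Qed.

Lemma Ulam_mulmx (lam : 'rV[R]_3) (v : 'cV[C]_4) :
  Ulam lam *m v = phase_model bell_sign bell (bell_amplitude v) lam.
Proof.
have -> : Ulam lam = \sum_m expi (- energy bell_sign m lam) *: bell_proj m.
  rewrite /Ulam pauli_bellE scaler_sumr.
  rewrite (eq_bigr (fun m => (iu R * (- energy bell_sign m lam)%:C) *: bell_proj m)).
    apply: expmx_spectral; [exact: bell_proj_mul | exact: sum_bell_proj |].
    by move=> m k l; rewrite mxE.
  by move=> m _; rewrite scalerA rmorphN mulrN mulNr.
apply/matrixP => k z; rewrite (ord1 z) mulmx_suml summxE !mxE; apply: eq_bigr => m _.
rewrite -scalemxAl !mxE /bell_amplitude -mulrA mulr_suml; congr (_ * _).
by apply: eq_bigr => l _; rewrite mxE !rmorphM; ring.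
Qed.

Lemma probe_populations a b g d pb pg pd m :
  2 * (Re (bell_amplitude (probe a b g d pb pg pd) m) ^+ 2
       + Im (bell_amplitude (probe a b g d pb pg pd) m) ^+ 2)
  = [:: (a ^+ 2 + d ^+ 2 + 2 * a * d * cos pd) / 2;
        (a ^+ 2 + d ^+ 2 - 2 * a * d * cos pd) / 2;
        (b ^+ 2 + g ^+ 2 + 2 * b * g * cos (pb - pg)) / 2;
        (b ^+ 2 + g ^+ 2 - 2 * b * g * cos (pb - pg)) / 2]`_m.
Proof.
set z := bell_amplitude _.
have amplitudeE : z m = (2^-1)%:C * (([:: a; a; b; b]`_m)%:C * expi [:: 0; 0; pb; pb]`_m
                                    + ([:: d; - d; g; - g]`_m)%:C * expi [:: pd; pd; pg; pg]`_m).
  case: m => [[|[|[|[|?]]]] ?] //; apply: complex_ext;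
    rewrite /z /bell_amplitude !big_ord_recr big_ord0 /= !mxE /bell;
    by simpl nth; rewrite !ReImE ?cos0 ?sin0; ring.
rewrite amplitudeE sqr_norm_half_expi_add.
by case: m {amplitudeE} => [[|[|[|[|?]]]] ?] //=; rewrite ?sub0r ?cosN; ring.
Qed.

Lemma qfi_model a b g d pb pg pd lam :
  qfi (model a b g d pb pg pd) lam
  = 4 *: covmx bell_sign (fun m => [:: (a ^+ 2 + d ^+ 2 + 2 * a * d * cos pd) / 2;
                                       (a ^+ 2 + d ^+ 2 - 2 * a * d * cos pd) / 2;
                                       (b ^+ 2 + g ^+ 2 + 2 * b * g * cos (pb - pg)) / 2;
                                       (b ^+ 2 + g ^+ 2 - 2 * b * g * cos (pb - pg)) / 2]`_m).
Proof.
have -> : model a b g d pb pg pd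
          = phase_model bell_sign bell (bell_amplitude (probe a b g d pb pg pd)).
  by apply/funext => l; exact: Ulam_mulmx.
rewrite (qfi_phase_model bell_sign bell_orthogonal); congr (_ *: covmx _ _).
by apply/funext => m; exact: probe_populations.
Qed.

Lemma det_covmx_bell (x0 x1 x2 x3 : R) : x0 + x1 + x2 + x3 = 1 ->
  \det (covmx bell_sign (fun m => [:: x0; x1; x2; x3]`_m)) = 256 * (x0 * x1 * x2 * x3).
Proof.
move=> sum1; have -> : x3 = 1 - x0 - x1 - x2 by rewrite -sum1; ring.
rewrite (expand_det_row _ ord0) !big_ord_recr big_ord0 /= /cofactor.
rewrite !(expand_det_row _ ord0) !big_ord_recr !big_ord0 /= /cofactor !det_mx11 !mxE /=.
by rewrite !big_ord_recr !big_ord0 /bell_sign /=; ring.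
Qed.

Lemma sum_cofactor_covmx_bell (x0 x1 x2 x3 : R) : x0 + x1 + x2 + x3 = 1 ->
  \sum_j cofactor (covmx bell_sign (fun m => [:: x0; x1; x2; x3]`_m)) j j
  = 48 * (x1 * x2 * x3 + x0 * x2 * x3 + x0 * x1 * x3 + x0 * x1 * x2).
Proof.
move=> sum1; have -> : x3 = 1 - x0 - x1 - x2 by rewrite -sum1; ring.
rewrite !big_ord_recr big_ord0 /= /cofactor.
rewrite !(expand_det_row _ ord0) !big_ord_recr !big_ord0 /= /cofactor !det_mx11 !mxE /=.
by rewrite !big_ord_recr !big_ord0 /bell_sign /=; ring.
Qed.
End BellBasis.

Local Close Scope complex_scope.

Lemma four_mul_population_pair (R : realType) (u v x : R) :
  4 * ((u ^+ 2 + v ^+ 2 + 2 * u * v * cos x) / 2) * ((u ^+ 2 + v ^+ 2 - 2 * u * v * cos x) / 2)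
  = u ^+ 4 + v ^+ 4 - 2 * u ^+ 2 * v ^+ 2 * cos (2 * x).
Proof. by rewrite [2 * x]mulr_natl cos_mulr2n; field. Qed.

Theorem mainTheorem2 (R : realType) (a b g d pb pg pd : R) (lam : 'rV[R]_3) :
  0 <= a <= 1 -> 0 <= b <= 1 -> 0 <= g <= 1 -> 0 <= d <= 1 ->
  a ^+ 2 + b ^+ 2 + g ^+ 2 + d ^+ 2 = 1 ->
  0 <= pb < 2 * pi -> 0 <= pg < 2 * pi -> 0 <= pd < 2 * pi ->
  let Q := qfi (model a b g d pb pg pd) lam in
  \det Q = 1024 * (a ^+ 4 + d ^+ 4 - 2 * a ^+ 2 * d ^+ 2 * cos (2 * pd))
                * (b ^+ 4 + g ^+ 4 - 2 * b ^+ 2 * g ^+ 2 * cos (2 * (pb - pg)))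
  /\
  (Q \in unitmx ->
   \tr (invmx Q) =
     3 / 16 * ((a ^+ 2 + d ^+ 2) /
                 (a ^+ 4 - 2 * a ^+ 2 * d ^+ 2 * cos (2 * pd) + d ^+ 4)
             + (b ^+ 2 + g ^+ 2) /
                 (b ^+ 4 - 2 * b ^+ 2 * g ^+ 2 * cos (2 * (pb - pg)) + g ^+ 4))).
Proof.
move=> _ _ _ _ normalised _ _ _ Q; move: (qfi_model a b g d pb pg pd lam); rewrite -/Q.
set x0 := (a ^+ 2 + d ^+ 2 + 2 * a * d * cos pd) / 2.
set x1 := (a ^+ 2 + d ^+ 2 - 2 * a * d * cos pd) / 2.
set x2 := (b ^+ 2 + g ^+ 2 + 2 * b * g * cos (pb - pg)) / 2.
set x3 := (b ^+ 2 + g ^+ 2 - 2 * b * g * cos (pb - pg)) / 2.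
set M := covmx _ _ => QE.
have sum1 : x0 + x1 + x2 + x3 = 1 by rewrite -normalised /x0 /x1 /x2 /x3; field.
have detM : \det M = 256 * (x0 * x1 * x2 * x3) by exact: det_covmx_bell.
have norm01 : a ^+ 2 + d ^+ 2 = x0 + x1 by rewrite /x0 /x1; field.
have norm23 : b ^+ 2 + g ^+ 2 = x2 + x3 by rewrite /x2 /x3; field.
rewrite [a ^+ 4 - _ + _]addrAC [b ^+ 4 - _ + _]addrAC -!four_mul_population_pair.
rewrite -/x0 -/x1 -/x2 -/x3; split=> [|unitQ]; first by rewrite QE detZ detM; ring.
have unit4 : (4 : R) \is a GRing.unit by rewrite unitfE pnatr_eq0.
have unitM : M \in unitmx by rewrite -(unitmxZ _ unit4) -QE.
rewrite QE invmxZ -?QE // mxtraceZ mxtrace_invmx // sum_cofactor_covmx_bell // detM.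
rewrite norm01 norm23; clearbody x0 x1 x2 x3.
have : x0 * x1 * x2 * x3 != 0.
  by apply: contraTneq unitM => x0123; rewrite unitmxE detM x0123 mulr0 unitr0.
rewrite !mulf_eq0 !negb_or => /andP[/andP[/andP[x0nz x1nz] x2nz] x3nz].
by field; rewrite x0nz x1nz x2nz x3nz.
Qed.
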